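(* Let $K$ be a field, $X$ a set, $F\subseteq K\langle X\rangle$ and $f\in(F)$. Let $Q=(V,E,X,s,t,l)$ be a labelled quiver such that $f$ is compatible with $Q$ and all elements of $F$ are uniformly compatible with $Q$. Then, for every representation $\mathcal{R}=(\mathcal{V},\varphi)$ of $Q$ over $K$ that is consistent with the labelling $l$ and such that every realization of every element of $F$ with respect to $\mathcal{R}$ is zero, every realization of $f$ with respect to $\mathcal{R}$ is zero.
   Context: $K\langle X\rangle$ is the free algebra of noncommutative polynomials over $K$ in indeterminates $X$, with monomials the words in $\langle X\rangle$ (including the empty word $1$); $\operatorname{supp}(f)$ is the set of monomials with nonzero coefficient; $(F)$ is the two-sided ideal generated by $F$. A labelled quiver $Q=(V,E,X,s,t,l)$ has vertices $V$, edges $E$, source/target maps $s,t:E\to V$ and labelling $l:E\to X$. A nonempty path $p=e_n\cdots e_1$ (with $s(e_{i+1})=t(e_i)$) has label $l(e_n)\cdots l(e_1)$, source $s(e_1)$, target $t(e_n)$; each vertex $v$ has an empty path with label $1$ and source and target $v$. For a monomial $m$, $\sigma(m)=\{(s(p),t(p)) : p \text{ a path with } l(p)=m\}$; for a polynomial $f$, $\sigma(f)=\bigcap_{m\in\operatorname{supp}(f)}\sigma(m)$ (so $\sigma(0)=V\times V$). $f$ is compatible with $Q$ if $\sigma(f)\neq\emptyset$, and uniformly compatible if it is compatible and all $m\in\operatorname{supp}(f)$ have the same set $\sigma(m)$. $K\langle X\rangle_{v,w}=\{f : (v,w)\in\sigma(f)\}$. A representation $(\mathcal{V},\varphi)$ of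 $Q$ over $K$ assigns to each vertex $v$ a $K$-vector space $\mathcal{V}_v$ and to each edge $e$ a $K$-linear map $\varphi(e):\mathcal{V}_{s(e)}\to\mathcal{V}_{t(e)}$; it is consistent with $l$ if for any two nonempty paths $e_n\cdots e_1$ and $d_n\cdots d_1$ with the same source and target and equal labels, $\varphi(e_n)\cdots\varphi(e_1)=\varphi(d_n)\cdots\varphi(d_1)$. For a consistent representation and $v,w\in V$, $\varphi_{v,w}:K\langle X\rangle_{v,w}\to L(\mathcal{V}_v,\mathcal{V}_w)$ is the $K$-linear map with $\varphi_{v,w}(l(e_n\cdots e_1))=\varphi(e_n)\cdots\varphi(e_1)$ for nonempty paths $e_n\cdots e_1$ from $v$ to $w$, and $\varphi_{v,v}(1)=\mathrm{id}_{\mathcal{V}_v}$. For $f\in K\langle X\rangle_{v,w}$, $\varphi_{v,w}(f)$ is called a realization of $f$ with respect to the representation; the realizations of $f$ are all $\varphi_{v,w}(f)$ with $(v,w)\in\sigma(f)$. *)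

From Stdlib Require List.
From HB Require Import structures.
From mathcomp Require Import all_boot all_order all_algebra.
Set Implicit Arguments. Unset Strict Implicit. Unset Printing Implicit Defensive.
Import GRing.Theory.
Local Open Scope ring_scope.

(* A monomial is a word over X, i.e. a [seq X]; the empty word is 1.
   A noncommutative polynomial is a coefficient function on words with
   finite support. *)
Definition ncpoly (K : fieldType) (X : Type) := seq X -> K.

Definition is_ncpoly (K : fieldType) (X : Type) (f : ncpoly K X) : Prop :=
  exists ms : seq (seq X), forall m, f m != 0 -> List.In m ms.

Definition nc_zero (K : fieldType) (X : Type) : ncpoly K X := fun _ => 0.
Definition nc_add (K : fieldType) (X : Type) (f g : ncpoly K X) : ncpoly K X :=
  fun m => f m + g m.
Definition nc_mul (K : fieldType) (X : Type) (f g : ncpoly K X) : ncpoly K X :=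
  fun m => \sum_(i < (size m).+1) f (take i m) * g (drop i m).

Inductive in_ideal (K : fieldType) (X : Type) (F : ncpoly K X -> Prop) :
    ncpoly K X -> Prop :=
| ideal_gen g : F g -> in_ideal F g
| ideal_zero : in_ideal F (@nc_zero K X)
| ideal_add a b : in_ideal F a -> in_ideal F b -> in_ideal F (nc_add a b)
| ideal_mul a g b : is_ncpoly a -> is_ncpoly b -> in_ideal F g ->
    in_ideal F (nc_mul (nc_mul a g) b)
| ideal_ext a b : in_ideal F a -> a =1 b -> in_ideal F b.

Record lquiver (X : Type) := LQuiver {
  qV : Type; qE : Type; qs : qE -> qV; qt : qE -> qV; ql : qE -> X }.

Section Quiver.
Variables (X : Type) (Q : lquiver X).

(* A path p = e_n ... e_1 is represented by the list [:: e_n; ...; e_1];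
   QPath v w p : p is a path with source v and target w (the empty list is
   the empty path at v). *)
Inductive QPath (v : qV Q) : qV Q -> seq (qE Q) -> Prop :=
| qpath_nil : QPath v v [::]
| qpath_cons e p : QPath v (qs e) p -> QPath v (qt e) (e :: p).

Definition label (p : seq (qE Q)) : seq X := map (@ql X Q) p.

Definition sigma_mono (m : seq X) (v w : qV Q) : Prop :=
  exists p, QPath v w p /\ label p = m.

Definition sigma_poly (K : fieldType) (f : ncpoly K X) (v w : qV Q) : Prop :=
  forall m, f m != 0 -> sigma_mono m v w.

Definition compatible (K : fieldType) (f : ncpoly K X) : Prop :=
  exists v w, sigma_poly f v w.

Definition unif_compatible (K : fieldType) (f : ncpoly K X) : Prop :=
  compatible f /\
  forall m m', f m != 0 -> f m' != 0 ->
    forall v w, sigma_mono m v w <-> sigma_mono m' v w.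

Variables (K : fieldType) (Vs : qV Q -> lmodType K)
          (phi : forall e : qE Q, {linear Vs (qs e) -> Vs (qt e)}).

Local Unset Implicit Arguments.
Inductive PathMap (v : qV Q) : forall w : qV Q, seq (qE Q) -> (Vs v -> Vs w) -> Prop :=
| pmap_nil : PathMap v v [::] id
| pmap_cons e p (g : Vs v -> Vs (qs e)) :
    PathMap v (qs e) p g -> PathMap v (qt e) (e :: p) (fun u => phi e (g u)).
Arguments PathMap {v w}.
Arguments pmap_nil {v}.
Arguments pmap_cons {v} e p g.
Local Set Implicit Arguments.

Definition consistent : Prop :=
  forall v w p p' (g g' : Vs v -> Vs w),
    p <> [::] -> p' <> [::] -> label p = label p' ->
    PathMap p g -> PathMap p' g' -> g =1 g'.

(* realization v w f h : h = phi_{v,w}(f)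
     = sum_{m in supp f} f(m) * phi_{v,w}(m),
   where phi_{v,w}(m) is the composite along a path from v to w labelled m. *)
Definition realization (f : ncpoly K X) (v w : qV Q) (h : Vs v -> Vs w) : Prop :=
  exists (ms : seq (seq X)) (g : seq X -> Vs v -> Vs w),
    [/\ List.NoDup ms,
        (forall m, f m != 0 <-> List.In m ms),
        (forall m, List.In m ms -> exists p, label p = m /\ PathMap p (g m)) &
        (forall u, h u = \sum_(m <- ms) f m *: g m u)].

End Quiver.

Arguments sigma_mono {X} Q m v w.
Arguments sigma_poly {X} Q {K} f v w.
Arguments compatible {X} Q {K} f.
Arguments unif_compatible {X} Q {K} f.
Arguments realization {X Q K Vs} phi f v w h.

From HB Require Import structures.
From mathcomp Require Import all_boot all_order all_algebra.
From Stdlib Require Import ClassicalEpsilon.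
From Stdlib Require List Eqdep.
Set Implicit Arguments. Unset Strict Implicit. Unset Printing Implicit Defensive.
Import GRing.Theory.
Local Open Scope ring_scope.

(* Write phi(m) : V_v -> V_w for the composite along a path from v to w labelled by
   the word m; by consistency it does not depend on the path.  Call f null in
   context if, for all words al, be and vertices v, w, the sum of f(m) phi(al m be)
   over the support of f vanishes.  These f form a two-sided ideal: for a product
   a g b the sum regroups as a combination, over the monomials x of a and z of b,
   of the sums for g in the contexts (al x, z be).  Each generator g is null in
   context: if some al m0 be labels a path v -> w, cut it as v -> x -> y -> w;
   uniform compatibility gives every monomial of g a path x -> y, so the sum
   factors as phi(al) o (a realization of g at (x, y)) o phi(be) = 0, and if no
   such path exists every term is 0.  The empty context gives the theorem. *)

Lemma in_InP {T : eqType} {x : T} {s : seq T} : reflect (List.In x s) (x \in s).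
Proof.
elim: s => [|y s IH] /=; first by constructor.
by rewrite in_cons; apply: (iffP orP) => [[/eqP->|/IH]|[->|/IH]]; auto.
Qed.

Lemma NoDup_uniq (T : eqType) (s : seq T) : List.NoDup s <-> uniq s.
Proof.
elim: s => [|x s IH] /=; first by split=> // _; constructor.
split=> [nd | /andP[/in_InP xs /IH nd]]; last by constructor.
by inversion nd; apply/andP; split; [apply/in_InP | apply/IH].
Qed.

(* Letters get a classical decidable equality, so that words can be compared
   and deduplicated. *)
Definition letter (X : Type) : Type := X.
HB.instance Definition _ (X : Type) :=
  comparableMixin (fun x y : letter X => excluded_middle_informative (x = y)).

Definition splits (T : Type) (m : seq T) : seq (seq T * seq T) :=
  [seq (take i m, drop i m) | i <- iota 0 (size m).+1].

Lemma mem_splits (T : eqType) (m : seq T) (p : seq T * seq T) :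
  (p \in splits m) = (p.1 ++ p.2 == m).
Proof.
apply/mapP/eqP => [[i _ ->] | <-]; first exact: cat_take_drop.
exists (size p.1); first by rewrite mem_iota size_cat ltnS leq_addr.
by rewrite take_size_cat // drop_size_cat //; case: p.
Qed.

Lemma splits_uniq (T : eqType) (m : seq T) : uniq (splits m).
Proof.
rewrite map_inj_in_uniq ?iota_uniq // => i j; rewrite !mem_iota !ltnS => /= lei lej [eij _].
by rewrite -(size_takel lei) eij size_takel.
Qed.

Section SuppSum.
Variables (K : fieldType) (X : Type).
Local Notation word := (seq (letter X)).
Implicit Types (f a b g : ncpoly K X) (s : seq word).

(* The lists in [is_ncpoly] and [realization] have type [seq (seq X)], which
   carries no eqType. *)
Lemma in_wordsP (m : seq X) (s : seq (seq X)) :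
  reflect (List.In m s) ((m : word) \in (s : seq word)).
Proof. exact: (@in_InP _ (m : word) s). Qed.

Lemma NoDup_words (s : seq (seq X)) : List.NoDup s <-> uniq (s : seq word).
Proof. exact: (@NoDup_uniq _ (s : seq word)). Qed.

Definition covers f s := forall m : word, f m != 0 -> m \in s.

Lemma is_ncpolyP f : is_ncpoly f <-> exists s, covers f s.
Proof.
by split=> -[s cs]; exists s => m /cs/in_wordsP.
Qed.

Lemma covers_add a b sa sb : covers a sa -> covers b sb -> covers (nc_add a b) (sa ++ sb).
Proof.
move=> ca cb m; rewrite mem_cat; have [a0|/ca -> //] := eqVneq (a m) 0.
by rewrite /nc_add a0 add0r => /cb ->; rewrite orbT.
Qed.

Lemma covers_mul a g sa sg : covers a sa -> covers g sg ->
  covers (nc_mul a g) [seq x ++ y | x <- sa, y <- sg].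
Proof.
move=> ca cg m; apply: contraR => mP; rewrite /nc_mul big1 // => i _.
apply/eqP; rewrite mulf_eq0; apply: contraR mP; rewrite negb_or => /andP[/ca xa /cg yg].
by rewrite -(cat_take_drop i m) allpairs_f.
Qed.

Lemma ncpoly_ideal (F : ncpoly K X -> Prop) f :
  (forall g, F g -> is_ncpoly g) -> in_ideal F f -> is_ncpoly f.
Proof.
move=> Fpoly; elim=> {f} [g /Fpoly // | | a b _ + _ | a g b + + _ | a b _ +];
  rewrite ?is_ncpolyP.
- by exists [::] => m; rewrite eqxx.
- move=> [sa ca] [sb cb]; exists (sa ++ sb); exact: covers_add.
- move=> [sa ca] [sb cb] [sg cg]; eexists; exact: covers_mul (covers_mul ca cg) cb.
- move=> [s cs] eab; exists s => m; rewrite -eab; exact: cs.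
Qed.

Variable M : lmodType K.
Implicit Types (Phi : word -> M).

(* Over any list covering the support of [f] this is the sum of the [f m *: Phi m]
   (supp_sum_cover); [undup] prevents counting a word twice. *)
Definition supp_sum s f Phi : M := \sum_(m <- undup s) f m *: Phi m.

Lemma supp_sum_cover s s' f Phi : covers f s -> covers f s' ->
  supp_sum s f Phi = supp_sum s' f Phi.
Proof.
move=> cs cs'; apply: perm_big_supp; apply: uniq_perm; rewrite ?filter_uniq ?undup_uniq //.
move=> m; rewrite !mem_filter !mem_undup; case: eqP => //= /eqP fPhi0.
have fm0 : f m != 0 by apply: contraNneq fPhi0 => ->; rewrite scale0r.
by rewrite cs ?cs'.
Qed.

Lemma eq_supp_sum s f f' Phi Phi' : f =1 f' -> {in s, Phi =1 Phi'} ->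
  supp_sum s f Phi = supp_sum s f' Phi'.
Proof.
by move=> ef ePhi; apply: eq_big_seq => m; rewrite mem_undup => /ePhi ->; rewrite ef.
Qed.

Lemma supp_sum0 s Phi : supp_sum s (@nc_zero K X) Phi = 0.
Proof. by rewrite /supp_sum big1 // => m _; rewrite scale0r. Qed.

Lemma supp_sumD s a b Phi :
  supp_sum s (nc_add a b) Phi = supp_sum s a Phi + supp_sum s b Phi.
Proof. by rewrite /supp_sum -big_split; apply: eq_bigr => m _; rewrite scalerDl. Qed.

Lemma supp_sumM a g sa sg s Phi : covers a sa -> covers g sg -> covers (nc_mul a g) s ->
  supp_sum s (nc_mul a g) Phi =
  \sum_(x <- undup sa) \sum_(y <- undup sg) (a x * g y) *: Phi (x ++ y).
Proof.
move=> ca cg cs; rewrite (supp_sum_cover _ cs (covers_mul ca cg)) /supp_sum.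
set U := undup _; pose term (p : word * word) := (a p.1 * g p.2) *: Phi (p.1 ++ p.2).
(* Both sides sum [term] over the pairs of the supports; on the left each pair
   (x, y) is reached through the splitting of the word x ++ y. *)
transitivity (\sum_(p <- [seq p | m <- U, p <- splits m]) term p).
  rewrite big_allpairs_dep; apply: eq_bigr => m _.
  rewrite /nc_mul scaler_suml big_map.
  rewrite -[(size m).+1]subn0 -/(index_iota 0 _) big_mkord.
  by apply: eq_bigr => i _; rewrite /term /= cat_take_drop.
transitivity (\sum_(p <- [seq (x, y) | x <- undup sa, y <- undup sg]) term p); last first.
  by rewrite big_allpairs.
apply: perm_big_supp; apply: uniq_perm; rewrite ?filter_uniq //.
- apply: allpairs_uniq_dep; rewrite ?undup_uniq //; first by move=> m _; apply: splits_uniq.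
  move=> _ _ /allpairsPdep[m [p [_ + ->]]] /allpairsPdep[m' [p' [_ + ->]]] /= epp'.
  by rewrite !mem_splits epp' => /eqP <- /eqP <-.
- by apply: allpairs_uniq; rewrite ?undup_uniq // => -[x y] [x' y'] _ _ [-> ->].
move=> [x y]; rewrite !mem_filter; have [//|term_nz] := eqVneq (term (x, y)) 0.
have /andP[ax gy] : (a x != 0) && (g y != 0).
  apply: contraNT term_nz; rewrite negb_and !negbK /term /=.
  by case/orP=> /eqP ->; rewrite ?mul0r ?mulr0 scale0r.
rewrite (allpairs_f pair) ?mem_undup ?ca ?cg //; apply/allpairsPdep.
by exists (x ++ y), (x, y); rewrite mem_splits mem_undup allpairs_f ?ca ?cg.
Qed.

Lemma supp_sumMl a g sa sg s Phi : covers a sa -> covers g sg -> covers (nc_mul a g) s ->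
  supp_sum s (nc_mul a g) Phi =
  \sum_(x <- undup sa) a x *: supp_sum sg g (fun y => Phi (x ++ y)).
Proof.
move=> ca cg cs; rewrite (supp_sumM _ ca cg cs); apply: eq_bigr => x _.
by rewrite scaler_sumr; apply: eq_bigr => y _; rewrite scalerA.
Qed.

Lemma supp_sumMr a g sa sg s Phi : covers a sa -> covers g sg -> covers (nc_mul a g) s ->
  supp_sum s (nc_mul a g) Phi =
  \sum_(y <- undup sg) g y *: supp_sum sa a (fun x => Phi (x ++ y)).
Proof.
move=> ca cg cs; rewrite (supp_sumM _ ca cg cs) exchange_big; apply: eq_bigr => y _.
by rewrite scaler_sumr; apply: eq_bigr => x _; rewrite scalerA mulrC.
Qed.

End SuppSum.

Section Representation.
Variables (X : Type) (Q : lquiver X) (K : fieldType) (Vs : qV Q -> lmodType K)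
  (phi : forall e : qE Q, {linear Vs (qs e) -> Vs (qt e)}).
Local Notation pathmap := (PathMap X Q K Vs phi).
Local Notation word := (seq (letter X)).
Implicit Types (v w x y : qV Q) (p : seq (qE Q)).

Lemma qpath_cat x w p1 v p2 : QPath x w p1 -> QPath v x p2 -> QPath v w (p1 ++ p2).
Proof. by elim=> [|e p _ IH] //= h2; constructor; apply: IH. Qed.

Lemma sigma_mono_cat (a b : seq X) v w :
  sigma_mono Q (a ++ b) v w <-> exists x, sigma_mono Q a x w /\ sigma_mono Q b v x.
Proof.
split=> [[p [hp]] | [x [[pa [ha <-]] [pb [hb <-]]]]]; last first.
  by exists (pa ++ pb); rewrite /label map_cat; split=> //; apply: qpath_cat ha hb.
elim: {p} hp a => [|e p hp IH] [|c a] //=.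
- by move=> <-; exists v; split; exists [::]; split=> //; constructor.
- by move=> lp; exists (qt e); split; [exists [::] | exists (e :: p)]; split=> //; constructor.
case=> <- /IH[x [[pa [ha <-]] sb]]; exists x; split=> //.
by exists (e :: pa); split=> //; constructor.
Qed.

Lemma qpath_pathmap v w p : QPath v w p -> exists g, pathmap v w p g.
Proof. by elim=> [|e p' _ [g hg]]; eexists; constructor; apply: hg. Qed.

Lemma pathmap_qpath v w p g : pathmap v w p g -> QPath v w p.
Proof. by elim=> [|e p' g' _ IH]; constructor. Qed.

Lemma pathmap_cat x w p1 g1 v p2 g2 :
  pathmap x w p1 g1 -> pathmap v x p2 g2 -> pathmap v w (p1 ++ p2) (g1 \o g2).
Proof. by elim=> [|e p g _ IH] //= h2; constructor; apply: IH. Qed.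

Lemma pathmap_sum v w p g (I : Type) (r : seq I) (c : I -> K) (x : I -> Vs v) :
  pathmap v w p g -> g (\sum_(i <- r) c i *: x i) = \sum_(i <- r) c i *: g (x i).
Proof.
elim=> [|e p' g' _ IH] //=; rewrite IH linear_sum.
by apply: eq_bigr => i _; rewrite linearZ.
Qed.

Lemma pathmap_nil v w p g : pathmap v w p g -> p = [::] ->
  existT (fun w => Vs v -> Vs w) w g = existT _ v id.
Proof. by case. Qed.

(* The map along some path labelled [m], or [0] if there is none; for a
   consistent representation the choice of path is irrelevant (word_map_pathmap). *)
Definition word_map (m : seq X) v w : Vs v -> Vs w :=
  match excluded_middle_informative (exists g p, label p = m /\ pathmap v w p g) with
  | left ex_g => proj1_sig (constructive_indefinite_description _ ex_g)
  | right _ => fun=> 0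
  end.
Arguments word_map : clear implicits.

Lemma word_mapP m v w : sigma_mono Q m v w ->
  exists p, label p = m /\ pathmap v w p (word_map m v w).
Proof.
move=> [p [hp lp]]; have [g hg] := qpath_pathmap hp.
rewrite /word_map; case: excluded_middle_informative => [ex_g | []]; last by exists g, p.
by case: constructive_indefinite_description.
Qed.

Lemma word_map_out m v w : ~ sigma_mono Q m v w -> word_map m v w =1 fun=> 0.
Proof.
move=> nsm u; rewrite /word_map; case: excluded_middle_informative => // -[g [p [lp hp]]].
by case: nsm; exists p; split=> //; apply: pathmap_qpath hp.
Qed.

Lemma word_map_sum m v w (I : Type) (r : seq I) (c : I -> K) (x : I -> Vs v) :
  sigma_mono Q m v w ->
  word_map m v w (\sum_(i <- r) c i *: x i) = \sum_(i <- r) c i *: word_map m v w (x i).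
Proof. by move=> /word_mapP[p [_ hp]]; apply: pathmap_sum hp. Qed.

Lemma word_map0 m v w : sigma_mono Q m v w -> word_map m v w 0 = 0.
Proof.
by move=> /(@word_map_sum _ _ _ unit [::] (fun=> 0) (fun=> 0)); rewrite !big_nil.
Qed.

Hypothesis phi_consistent : consistent phi.

Lemma pathmap_unique v w p p' g g' :
  label p = label p' -> pathmap v w p g -> pathmap v w p' g' -> g =1 g'.
Proof.
case: p => [|e p]; case: p' => [|e' p'] // lpp' hp hp'.
  suff -> : g = g' by [].
  apply: (Eqdep.EqdepTheory.inj_pair2 _ (fun w => Vs v -> Vs w)).
  by rewrite (pathmap_nil hp) ?(pathmap_nil hp').
exact: phi_consistent hp hp'.
Qed.

Lemma word_map_pathmap m v w p g :
  label p = m -> pathmap v w p g -> word_map m v w =1 g.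
Proof.
move=> lp hp; have [p' [lp' hp']] := word_mapP (ex_intro _ p (conj (pathmap_qpath hp) lp)).
by apply: pathmap_unique hp' hp; rewrite lp lp'.
Qed.

Lemma word_map_cat (a b : seq X) x v w : sigma_mono Q a x w -> sigma_mono Q b v x ->
  word_map (a ++ b) v w =1 word_map a x w \o word_map b v x.
Proof.
move=> /word_mapP[pa [la ha]] /word_mapP[pb [lb hb]].
by apply: word_map_pathmap (pathmap_cat ha hb); rewrite /label map_cat -la -lb.
Qed.

Lemma realization_supp_sum (f : ncpoly K X) v w h : realization phi f v w h ->
  exists s : seq word, covers f s /\ forall u, h u = supp_sum s f (fun m => word_map m v w u).
Proof.
move=> [ms [g [ms_nodup ms_supp ms_paths h_sum]]]; exists ms.
have ms_uniq := (NoDup_words ms).1 ms_nodup.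
split=> [m /ms_supp/in_wordsP // | u]; rewrite h_sum /supp_sum undup_id //.
rewrite -[LHS]/(\sum_(m <- (ms : seq word)) f m *: g m u).
apply: eq_big_seq => m /in_wordsP/ms_paths[p [lp hp]].
by rewrite (word_map_pathmap lp hp).
Qed.

End Representation.

Arguments word_map {X Q K Vs} phi m v w.

Section NullInContext.
Variables (X : Type) (Q : lquiver X) (K : fieldType) (Vs : qV Q -> lmodType K)
  (phi : forall e : qE Q, {linear Vs (qs e) -> Vs (qt e)}).
Local Notation word := (seq (letter X)).
Local Notation word_map := (word_map phi).
Hypothesis phi_consistent : consistent phi.
Implicit Types (f a b g : ncpoly K X).

Definition null_in_context f := forall (al be : word) v w (u : Vs v) s, covers f s ->
  supp_sum s f (fun m => word_map (al ++ m ++ be) v w u) = 0.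

Definition realizations_vanish f := forall v w, sigma_poly Q f v w ->
  forall h, realization phi f v w h -> forall u, h u = 0.

Lemma supp_sum_realization g s x y : covers g s ->
  sigma_poly Q g x y -> realization phi g x y (fun u => supp_sum s g (fun m => word_map m x y u)).
Proof.
move=> cs sxy; set ms := [seq m : word <- undup s | g m != 0].
exists ms, (fun m => word_map m x y); split.
- by apply/NoDup_words; rewrite filter_uniq ?undup_uniq.
- move=> m; rewrite (rwP (in_wordsP m ms)) mem_filter mem_undup.
  by split=> [gm | /andP[] //]; rewrite gm cs.
- by move=> m /in_wordsP; rewrite mem_filter => /andP[/sxy/word_mapP].
move=> u; rewrite big_filter big_mkcond; apply: eq_bigr => m _.
by case: eqVneq => [->|]; rewrite ?scale0r.
Qed.

Lemma null_in_context0 : null_in_context (@nc_zero K X).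
Proof. by move=> *; apply: supp_sum0. Qed.

Lemma null_in_contextD a b : is_ncpoly a -> is_ncpoly b ->
  null_in_context a -> null_in_context b -> null_in_context (nc_add a b).
Proof.
move=> /is_ncpolyP[sa ca] /is_ncpolyP[sb cb] a_null b_null al be v w u s cs.
have cs' : covers (nc_add a b) (s ++ sa ++ sb).
  by move=> m /cs; rewrite mem_cat => ->.
rewrite (supp_sum_cover _ cs cs') supp_sumD a_null ?b_null ?addr0 // => m.
  by move/cb; rewrite !mem_cat => ->; rewrite !orbT.
by move/ca; rewrite !mem_cat => ->; rewrite !orbT.
Qed.

Lemma null_in_contextM a g b : is_ncpoly a -> is_ncpoly g -> is_ncpoly b ->
  null_in_context g -> null_in_context (nc_mul (nc_mul a g) b).
Proof.
move=> /is_ncpolyP[sa ca] /is_ncpolyP[sg cg] /is_ncpolyP[sb cb] g_null al be v w u s cs.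
have cag := covers_mul ca cg.
rewrite (supp_sumMr _ cag cb cs) big1 // => z _.
rewrite (supp_sumMl _ ca cg cag) big1 ?scaler0 // => x _.
rewrite -[RHS](scaler0 _ (a x)) -(g_null (al ++ x) (z ++ be) v w u sg cg); congr (_ *: _).
by apply: eq_supp_sum => // y _; rewrite !catA.
Qed.

Lemma null_in_context_eq a b : a =1 b -> null_in_context a -> null_in_context b.
Proof.
move=> eab a_null al be v w u s cs; rewrite -(eq_supp_sum eab (in1W (frefl _))).
by apply: a_null => m; rewrite eab; apply: cs.
Qed.

Lemma null_in_context_gen g : unif_compatible Q g -> realizations_vanish g ->
  null_in_context g.
Proof.
move=> [_ g_unif] g_null al be v w u s cs.
have [[m0 [gm0]] | no_path] :=
  classic (exists m0, g m0 != 0 /\ sigma_mono Q (al ++ m0 ++ be) v w); last first.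
  rewrite /supp_sum big1 // => m _; have [->|gm] := eqVneq (g m) 0; first by rewrite scale0r.
  by rewrite word_map_out ?scaler0 // => sm; apply: no_path; exists m.
move=> /sigma_mono_cat[y [sal /sigma_mono_cat[x [sm0 sbe]]]].
have sxy : sigma_poly Q g x y by move=> m gm; apply/(g_unif m0 m gm0 gm).
rewrite -(word_map0 phi sal) -(g_null x y sxy _ (supp_sum_realization cs sxy) (word_map be v x u)).
rewrite word_map_sum //; apply: eq_bigr => m _.
have [->|gm] := eqVneq (g m) 0; first by rewrite !scale0r.
have smbe : sigma_mono Q (m ++ be) v y by apply/sigma_mono_cat; exists x; split; [apply: sxy|].
by rewrite (word_map_cat phi_consistent sal smbe) /= (word_map_cat phi_consistent (sxy m gm) sbe).
Qed.

Lemma null_in_context_ideal (F : ncpoly K X -> Prop) f :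
  (forall g, F g -> is_ncpoly g) -> (forall g, F g -> unif_compatible Q g) ->
  (forall g, F g -> realizations_vanish g) -> in_ideal F f -> null_in_context f.
Proof.
move=> F_poly F_unif F_null; elim=> {f}.
- by move=> g Fg; apply: null_in_context_gen; [apply: F_unif | apply: F_null].
- exact: null_in_context0.
- move=> a b a_id a_null b_id b_null.
  by apply: null_in_contextD => //; apply: ncpoly_ideal F_poly _.
- move=> a g b a_poly b_poly g_id g_null.
  by apply: null_in_contextM => //; apply: ncpoly_ideal F_poly g_id.
- by move=> a b _ a_null eab; apply: null_in_context_eq eab a_null.
Qed.

Lemma null_in_context_realizations_vanish f :
  null_in_context f -> realizations_vanish f.
Proof.
move=> f_null v w _ h /(realization_supp_sum phi_consistent)[s [cs h_sum]] u.
rewrite h_sum -[RHS](f_null [::] [::] v w u s cs).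
by apply: eq_supp_sum => // m _; rewrite cats0.
Qed.

End NullInContext.

Theorem theorem5p7 (K : fieldType) (X : Type) (F : ncpoly K X -> Prop)
  (f : ncpoly K X) (Q : lquiver X)
  (Vs : qV Q -> lmodType K)
  (phi : forall e : qE Q, {linear Vs (qs e) -> Vs (qt e)}) :
  (forall g, F g -> is_ncpoly g) ->
  in_ideal F f ->
  compatible Q f ->
  (forall g, F g -> unif_compatible Q g) ->
  consistent phi ->
  (forall g, F g -> forall v w, sigma_poly Q g v w ->
     forall h, realization phi g v w h -> forall u, h u = 0) ->
  forall v w, sigma_poly Q f v w ->
    forall h : Vs v -> Vs w, realization phi f v w h -> forall u, h u = 0.
Proof.
move=> F_poly f_ideal _ F_unif phi_consistent F_null.
exact (null_in_context_realizations_vanish phi_consistent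
  (null_in_context_ideal phi_consistent F_poly F_unif F_null f_ideal)).
Qed.
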